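(* Let $P,Q$ be probability distributions on $\mathbb R^d$, absolutely continuous with respect to Lebesgue measure, with finite second moments and $L$-Lipschitz continuous densities $p,q$. Let $\epsilon>0$ and $\lambda>\epsilon$. If $\mathcal W_2(p,q)<\epsilon^2$, then for every $x\in\mathbb R^d$ $$p_\lambda(x)\le\frac{vol_d(\lambda)}{vol_d(\lambda-\epsilon)}q_\lambda(x)+\Big(\frac{vol_d(\lambda)}{vol_d(\lambda-\epsilon)}-1\Big)2\lambda L+\frac{\epsilon}{vol_d(\lambda-\epsilon)}.$$
   Context: $\mathcal W_2$ is the 2-Wasserstein distance. $B^d_\lambda(x)$ denotes the Euclidean ball in $\mathbb R^d$ of radius $\lambda$ centered at $x$, $vol_d(\lambda)$ its volume, and for a density $p$, $p_\lambda(x)=\frac1{vol_d(\lambda)}\int_{B^d_\lambda(0)}p(x+z)\,dz$ (similarly $q_\lambda$). *)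

From HB Require Import structures.
From mathcomp Require Import all_boot all_order all_algebra.
From mathcomp Require Import all_classical all_reals all_analysis.
Set Implicit Arguments. Unset Strict Implicit. Unset Printing Implicit Defensive.
Import Order.TTheory GRing.Theory Num.Theory.
Local Open Scope classical_set_scope.
Local Open Scope ring_scope.

(* Points of R^d are d-tuples of reals; [d.-tuple R] carries the product
   (= Borel) sigma-algebra generated by the coordinate projections. *)

Section Defs.
Context {R : realType} {d : nat}.
Local Notation V := (d.-tuple R).

Definition vadd (x y : V) : V := [tuple tnth x i + tnth y i | i < d].
Definition vsub (x y : V) : V := [tuple tnth x i - tnth y i | i < d].
Definition vzero : V := [tuple (0 : R) | i < d].

Definition enorm (x : V) : R := Num.sqrt (\sum_(i < d) tnth x i ^+ 2).

Definition eball (x : V) (lam : R) : set V := [set y | enorm (vsub y x) < lam].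

(* mu is the d-dimensional Lebesgue measure (on Borel sets): it gives every
   closed box its volume; this determines it uniquely. *)
Definition is_lebesgue (mu : {measure set V -> \bar R}) : Prop :=
  forall a b : V, (forall i, tnth a i <= tnth b i) ->
    mu [set x | forall i, tnth a i <= tnth x i <= tnth b i]
    = (\prod_(i < d) (tnth b i - tnth a i))%:E.

Definition vol (mu : {measure set V -> \bar R}) (lam : R) : R :=
  fine (mu (eball vzero lam)).

Definition is_density (mu : {measure set V -> \bar R}) (p : V -> R) : Prop :=
  [/\ measurable_fun setT p, (forall x, 0 <= p x) &
      (\int[mu]_x (p x)%:E = 1)%E].

Definition finite_second_moment (mu : {measure set V -> \bar R}) (p : V -> R)
  : Prop := (\int[mu]_x ((enorm x ^+ 2 * p x)%:E) < +oo)%E.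

Definition lipschitz_with (L : R) (p : V -> R) : Prop :=
  forall x y, `|p x - p y| <= L * enorm (vsub x y).

Definition distr_of (mu : {measure set V -> \bar R}) (p : V -> R) (A : set V)
  : \bar R := (\int[mu]_(x in A) (p x)%:E)%E.

Definition couplings (mu : {measure set V -> \bar R}) (p q : V -> R)
  : set (probability (V * V)%type R) :=
  [set pi | forall A : set V, measurable A ->
     pi (A `*` setT) = distr_of mu p A /\ pi (setT `*` A) = distr_of mu q A].

Definition W2 (mu : {measure set V -> \bar R}) (p q : V -> R) : \bar R :=
  ((ereal_inf [set (\int[pi]_z ((enorm (vsub z.1 z.2)) ^+ 2)%:E)%E
               | pi in couplings mu p q]) `^ (2^-1))%E.

Definition smooth (mu : {measure set V -> \bar R}) (lam : R) (p : V -> R)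
  (x : V) : R :=
  (vol mu lam)^-1 * (\int[mu]_(z in eball vzero lam) p (vadd x z)).

End Defs.

From HB Require Import structures.
From mathcomp Require Import all_boot all_order all_algebra.
From mathcomp Require Import all_classical all_reals all_analysis.
From mathcomp Require Import ring lra.
Import Order.TTheory GRing.Theory Num.Theory.
Local Open Scope classical_set_scope.
Local Open Scope ring_scope.

(* Compare the balls of radii lam - eps and lam around x.  As W2(p, q) < eps^2,
   some coupling of p and q has transport cost below eps^4, so by Markov's
   inequality it moves mass at most eps by a distance eps or more; hence
   P(B(x, lam - eps)) <= Q(B(x, lam)) + eps.  By Lipschitz continuity, p on the
   annulus B(x, lam) \ B(x, lam - eps) is at most its mean over B(x, lam - eps)
   plus 2 lam L, so P(B(x, lam)) exceeds (vol lam / vol (lam - eps)) times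
   P(B(x, lam - eps)) by at most (vol lam - vol (lam - eps)) 2 lam L.  Dividing
   by vol lam gives the bound, because translation invariance of Lebesgue
   measure (which follows from its values on boxes) turns p_lam(x) into
   P(B(x, lam)) / vol lam. *)

Section euclidean.
Context {R : realType} {d : nat}.
Local Notation V := (d.-tuple R).
Implicit Types (x y z : V) (r : R).

Lemma tnth_vadd x y i : tnth (vadd x y) i = tnth x i + tnth y i.
Proof. exact: tnth_mktuple. Qed.

Lemma tnth_vsub x y i : tnth (vsub x y) i = tnth x i - tnth y i.
Proof. exact: tnth_mktuple. Qed.

Lemma tnth_vzero i : tnth (vzero : V) i = 0.
Proof. exact: tnth_mktuple. Qed.

Lemma vsub0 x : vsub x vzero = x.
Proof. by apply: eq_from_tnth => i; rewrite tnth_vsub tnth_vzero subr0. Qed.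

Lemma vaddKl x y : vsub (vadd x y) x = y.
Proof.
by apply: eq_from_tnth => i; rewrite tnth_vsub tnth_vadd addrAC subrr add0r.
Qed.

Lemma vadd_vsub x y z : vadd (vsub x y) (vsub y z) = vsub x z.
Proof. by apply: eq_from_tnth => i; rewrite tnth_vadd !tnth_vsub addrA subrK. Qed.

Lemma enorm_ge0 x : 0 <= enorm x.
Proof. exact: sqrtr_ge0. Qed.

Lemma enorm_sqr x : enorm x ^+ 2 = \sum_(i < d) tnth x i ^+ 2.
Proof. by rewrite sqr_sqrtr // sumr_ge0 // => i _; exact: sqr_ge0. Qed.

Lemma normr_tnth_le_enorm x i : `|tnth x i| <= enorm x.
Proof.
rewrite -ler_sqr ?nnegrE ?enorm_ge0 // real_normK ?num_real // enorm_sqr.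
by rewrite (bigD1 i) //= lerDl sumr_ge0 // => j _; exact: sqr_ge0.
Qed.

Lemma enorm_eq0_tnth x : enorm x = 0 -> forall i, tnth x i = 0.
Proof.
move=> x0 i; apply/normr0_eq0/eqP.
by rewrite eq_le normr_ge0 andbT -x0 normr_tnth_le_enorm.
Qed.

Lemma cauchy_schwarz x y :
  \sum_(i < d) tnth x i * tnth y i <= enorm x * enorm y.
Proof.
set A := enorm x; set B := enorm y.
have [AB0|AB0] := eqVneq (A * B) 0.
  rewrite AB0; move/eqP: AB0; rewrite mulf_eq0 => /orP[] /eqP/enorm_eq0_tnth x0;
  by rewrite big1 // => i _; rewrite x0 ?mul0r ?mulr0.
have AB_gt0 : 0 < A * B by rewrite lt_def AB0 mulr_ge0 // enorm_ge0.
(* sum the AM-GM inequalities [2 x_i y_i A B <= x_i^2 B^2 + y_i^2 A^2] *)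
have amgm : 2 * (A * B) * \sum_(i < d) tnth x i * tnth y i
    <= 2 * (A * B) * (A * B).
  have -> : 2 * (A * B) * (A * B) =
      \sum_(i < d) (tnth x i ^+ 2 * B ^+ 2 + tnth y i ^+ 2 * A ^+ 2).
    by rewrite big_split /= -!mulr_suml -!enorm_sqr -/A -/B; ring.
  rewrite mulr_sumr; apply: ler_sum => i _.
  by have := sqr_ge0 (tnth x i * B - tnth y i * A); nra.
by rewrite -(ler_pM2l (_ : 0 < 2 * (A * B))) // mulr_gt0.
Qed.

Lemma enorm_vadd_le x y : enorm (vadd x y) <= enorm x + enorm y.
Proof.
rewrite -ler_sqr ?nnegrE ?addr_ge0 ?enorm_ge0 //.
have -> : enorm (vadd x y) ^+ 2 =
    enorm x ^+ 2 + 2 * \sum_(i < d) tnth x i * tnth y i + enorm y ^+ 2.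
  rewrite !enorm_sqr mulr_sumr -!big_split /=; apply: eq_bigr => i _.
  by rewrite tnth_vadd; ring.
by have := cauchy_schwarz x y; nra.
Qed.

Lemma enorm_vsubC x y : enorm (vsub x y) = enorm (vsub y x).
Proof.
by congr Num.sqrt; apply: eq_bigr => i _; rewrite !tnth_vsub -sqrrN opprB.
Qed.

Lemma enorm_vsub_le x y z :
  enorm (vsub x z) <= enorm (vsub x y) + enorm (vsub y z).
Proof. by rewrite -(vadd_vsub x y z) enorm_vadd_le. Qed.

Lemma preimage_vadd_eball x r : vadd x @^-1` eball x r = eball vzero r.
Proof. by apply/seteqP; split => z; rewrite /eball /= vsub0 vaddKl. Qed.

End euclidean.

Section measurability.
Context {R : realType} {d : nat}.
Local Notation V := (d.-tuple R).

Lemma measurable_vadd (x : V) : measurable_fun setT (vadd x).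
Proof.
apply/measurable_fun_tnthP => i.
rewrite (_ : _ \o _ = fun z : V => tnth x i + tnth z i); last first.
  by apply/funext => z /=; rewrite tnth_vadd.
by apply: measurable_realfun.measurable_funD => //; exact: measurable_tnth.
Qed.

Lemma measurable_vsubr (x : V) : measurable_fun setT (vsub ^~ x).
Proof.
apply/measurable_fun_tnthP => i.
rewrite (_ : _ \o _ = fun z : V => tnth z i - tnth x i); last first.
  by apply/funext => z /=; rewrite tnth_vsub.
by apply: measurable_realfun.measurable_funB => //; exact: measurable_tnth.
Qed.

Lemma measurable_vsub_pair : measurable_fun setT (fun z : V * V => vsub z.1 z.2).
Proof.
apply/measurable_fun_tnthP => i.
rewrite (_ : _ \o _ = fun z : V * V => tnth z.1 i - tnth z.2 i); last first.
  by apply/funext => z /=; rewrite tnth_vsub.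
apply: measurable_realfun.measurable_funB.
- exact: measurableT_comp (measurable_tnth i) measurable_fst.
- exact: measurableT_comp (measurable_tnth i) measurable_snd.
Qed.

Lemma measurable_enorm : measurable_fun setT (@enorm R d).
Proof.
apply: measurableT_comp.
  exact: measurable_realfun.continuous_measurable_fun (@sqrt_continuous R).
apply: measurable_sum => i.
by apply: measurable_realfun.measurable_funX; exact: measurable_tnth.
Qed.

Lemma measurable_sqr_enorm_vsub :
  measurable_fun setT (fun z : V * V => enorm (vsub z.1 z.2) ^+ 2).
Proof.
apply: measurable_realfun.measurable_funX.
exact: measurableT_comp measurable_enorm measurable_vsub_pair.
Qed.

Lemma measurable_eball (x : V) r : measurable (eball x r).
Proof.
have -> : eball x r = (enorm \o vsub ^~ x) @^-1` `]-oo, r[.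
  by apply/seteqP; split => y; rewrite /eball /= in_itv.
rewrite -[_ @^-1` _]setTI.
exact: (measurableT_comp measurable_enorm (measurable_vsubr x)).
Qed.

Lemma measurable_enorm_vsub_ge (e : R) :
  measurable [set z : V * V | e <= enorm (vsub z.1 z.2)].
Proof.
have -> : [set z : V * V | e <= enorm (vsub z.1 z.2)] =
    (enorm \o fun z : V * V => vsub z.1 z.2) @^-1` `[e, +oo[.
  by apply/seteqP; split => z; rewrite /= in_itv /= andbT.
rewrite -[_ @^-1` _]setTI.
exact: (measurableT_comp measurable_enorm measurable_vsub_pair).
Qed.

End measurability.

Section boxes.
Context {R : realType} {d : nat}.
Local Notation V := (d.-tuple R).
Implicit Types (a b x : V).

Definition box a b : set V := [set x | forall i, tnth a i <= tnth x i <= tnth b i].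

Definition boxes : set (set V) := [set A | exists a b, A = box a b].

Definition vconst (c : R) : V := [tuple c | _ < d].

Definition cube (n : nat) : set V := box (vconst (- n%:R)) (vconst n%:R).

Lemma measurable_box a b : measurable (box a b).
Proof.
have -> : box a b =
    \bigcap_(i in [set: 'I_d]) ((fun x : V => tnth x i) @^-1` `[tnth a i, tnth b i]).
  apply/seteqP; split => y /= h i; last by have := h i I; rewrite /= in_itv.
  by move=> _; rewrite /= in_itv h.
by apply: fin_bigcap_measurable => // i _; rewrite -[_ @^-1` _]setTI;
  exact: measurable_tnth.
Qed.

Lemma boxes_setI_closed : setI_closed boxes.
Proof.
move=> _ _ [a [b ->]] [a' [b' ->]].
exists [tuple Num.max (tnth a i) (tnth a' i) | i < d].
exists [tuple Num.min (tnth b i) (tnth b' i) | i < d].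
apply/seteqP; split => y /= => [[ya ya'] i|h].
  rewrite !tnth_mktuple ge_max le_min.
  by case/andP: (ya i) => -> ->; case/andP: (ya' i) => -> ->.
by split => i; have := h i; rewrite !tnth_mktuple ge_max le_min;
  case/andP => /andP[? ?] /andP[? ?]; apply/andP.
Qed.

Lemma bigcup_cube : \bigcup_n cube n = [set: V].
Proof.
apply/seteqP; split => // y _.
exists (Num.Def.archi_bound (enorm y)) => // i; rewrite !tnth_mktuple -ler_norml.
exact: le_trans (normr_tnth_le_enorm y i) (ltW (archi_boundP (enorm_ge0 y))).
Qed.

Lemma preimage_tnth_itv_oc_boxes i (a b : R) :
  <<s boxes >> ((fun x : V => tnth x i) @^-1` `]a, b]).
Proof.
pose lo n : V := [tuple if j == i then a + n.+1%:R^-1 else - n%:R | j < d].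
pose hi n : V := [tuple if j == i then b else n%:R | j < d].
have -> : (fun x : V => tnth x i) @^-1` `]a, b] = \bigcup_n box (lo n) (hi n).
  apply/seteqP; split => y; rewrite /preimage /= ?in_itv /=; last first.
    case=> n _ /(_ i); rewrite !tnth_mktuple eqxx => /andP[ay ->].
    by rewrite andbT (lt_le_trans _ ay) // ltrDl invr_gt0.
  case/andP => ay yb; have ya : 0 < tnth y i - a by rewrite subr_gt0.
  (* one [n] dominates both the coordinates of [y] and [1 / (y_i - a)] *)
  have c_ge0 : 0 <= enorm y + (tnth y i - a)^-1.
    by rewrite addr_ge0 ?enorm_ge0 // invr_ge0 ltW.
  have := archi_boundP c_ge0; set n := Num.Def.archi_bound _ => cn.
  exists n => // j; rewrite !tnth_mktuple.
  have := enorm_ge0 y; have := normr_tnth_le_enorm y j.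
  have := invr_gt0 (tnth y i - a); rewrite ya.
  case: eqP => [->|_] /= ya_inv ynorm y_ge0; last by rewrite -ler_norml; lra.
  rewrite yb andbT -lerBrDl -[X in _ <= X]invrK lef_pV2 ?posrE ?invr_gt0 //.
  by rewrite -natr1; lra.
case: (smallest_sigma_algebra setT boxes) => _ _; apply => n.
by apply: sub_sigma_algebra; exists (lo n), (hi n).
Qed.

Lemma measurable_boxes : (measurable : set (set V)) = <<s boxes >>.
Proof.
apply/seteqP; split; last first.
  apply: smallest_sub; first exact: sigma_algebra_measurable.
  by move=> _ [a [b ->]]; exact: measurable_box.
apply: smallest_sub; first exact: smallest_sigma_algebra.
move=> A; rewrite -bigcup_seq => -[i _ /= [B mB <-]].
have : sigma_algebra setT (image_set_system setT (fun x : V => tnth x i) <<s boxes >>).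
  exact: sigma_algebra_image (smallest_sigma_algebra _ _).
move=> /smallest_sub/(_ _ _ mB); apply => _ [[a b] _ <-] /=.
by rewrite /image_set_system /= setTI; exact: preimage_tnth_itv_oc_boxes.
Qed.

Lemma preimage_vadd_box x a b :
  vadd x @^-1` box a b = box (vsub a x) (vsub b x).
Proof.
apply/seteqP; split => y /= h i; have := h i;
  by rewrite !tnth_vsub ?tnth_vadd lerBlDl lerBrDl.
Qed.

Lemma box_eq0 a b i : tnth b i < tnth a i -> box a b = set0.
Proof.
move=> ba; apply/seteqP; split => // y /(_ i) /andP[ay yb].
by have := lt_le_trans (le_lt_trans yb ba) ay; rewrite ltxx.
Qed.

End boxes.

Section lebesgue_measure.
Context {R : realType} {d : nat}.
Local Notation V := (d.-tuple R).
Variables (mu : {measure set V -> \bar R}) (mu_lebesgue : is_lebesgue mu).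
Implicit Types (a b x : V) (r : R).

Lemma lebesgue_box_lty a b : (mu (box a b) < +oo)%E.
Proof.
have [ab|/existsNP[i /negP]] := pselect (forall i, tnth a i <= tnth b i).
  by rewrite /box mu_lebesgue ?ltry.
by rewrite -ltNge => /box_eq0 ->; rewrite measure0 ltry.
Qed.

Lemma lebesgue_preimage_vadd_box x a b :
  mu (vadd x @^-1` box a b) = mu (box a b).
Proof.
rewrite preimage_vadd_box.
have [ab|/existsNP[i /negP]] := pselect (forall i, tnth a i <= tnth b i).
  rewrite /box !mu_lebesgue // => [|i]; last by rewrite !tnth_vsub lerB.
  by congr (_%:E); apply: eq_bigr => i _; rewrite !tnth_vsub; ring.
rewrite -ltNge => ba.
by rewrite (box_eq0 _ _ _ ba) (box_eq0 _ _ i) ?measure0 // !tnth_vsub ltrD2r.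
Qed.

Lemma lebesgue_preimage_vadd x A : measurable A -> mu (vadd x @^-1` A) = mu A.
Proof.
move=> mA; have mx := measurable_vadd x.
apply/esym; apply: (measure_unique boxes cube measurable_boxes
  boxes_setI_closed _ bigcup_cube mu (pushforward mu (vadd x))) => //.
- by move=> n; exists (vconst (- n%:R)), (vconst n%:R).
- by move=> _ [a [b ->]]; rewrite -(lebesgue_preimage_vadd_box x).
- by move=> n; exact: lebesgue_box_lty.
Qed.

Lemma lebesgue_eball x r : mu (eball x r) = (vol mu r)%:E.
Proof.
rewrite -(lebesgue_preimage_vadd x _ (measurable_eball x r)) preimage_vadd_eball.
rewrite /vol fineK // ge0_fin_numE ?measure_ge0 //.
apply: le_lt_trans (lebesgue_box_lty (vconst (- `|r|)) (vconst `|r|)).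
apply: le_measure; rewrite ?inE; [exact: measurable_eball|exact: measurable_box|].
move=> z; rewrite /eball /= vsub0 => zr i; rewrite !tnth_mktuple -ler_norml.
by rewrite (le_trans (normr_tnth_le_enorm z i)) // (le_trans (ltW zr)) ?ler_norm.
Qed.

Lemma lebesgue_eball_lty x r : (mu (eball x r) < +oo)%E.
Proof. by rewrite lebesgue_eball ltry. Qed.

Lemma lebesgue_annulus x r s : r <= s ->
  mu (eball x s `\` eball x r) = (vol mu s - vol mu r)%:E.
Proof.
move=> rs; rewrite measureD; last exact: lebesgue_eball_lty.
- rewrite setIidr => [|z /lt_le_trans]; last exact.
  (* [measureD] sees [mu] as a content: view it as a measure again *)
  change (mu (eball x s) - mu (eball x r) = (vol mu s - vol mu r)%:E)%E.
  by rewrite !lebesgue_eball.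
- exact: measurable_eball.
- exact: measurable_eball.
Qed.

Lemma vol_le r s : r <= s -> vol mu r <= vol mu s.
Proof.
move=> rs; rewrite -lee_fin -!(lebesgue_eball vzero).
apply: le_measure; rewrite ?inE; [exact: measurable_eball..|].
by move=> z /lt_le_trans; apply.
Qed.

Lemma vol_gt0 r : 0 < r -> 0 < vol mu r.
Proof.
move=> r_gt0; pose c := r / d.+1%:R.
have c_gt0 : 0 < c by rewrite divr_gt0.
(* the cube of half-side [r / (d + 1)] lies in the ball of radius [r] *)
have cube_sub : box (vconst (- c)) (vconst c) `<=` (eball vzero r : set V).
  move=> z zc; rewrite /eball /= vsub0 -ltr_sqr ?nnegrE ?enorm_ge0 ?ltW //.
  rewrite enorm_sqr; apply: (@le_lt_trans _ _ (\sum_(i < d) c ^+ 2)).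
    apply: ler_sum => i _; have := zc i; rewrite !tnth_mktuple => /andP[? ?].
    by nra.
  have dr : r = c * d.+1%:R by rewrite divfK // pnatr_eq0.
  rewrite sumr_const card_ord -mulr_natl [in X in _ < X]dr -natr1.
  have : (0 : R) <= d%:R by []; nra.
have : (mu (box (vconst (- c)) (vconst c)) <= mu (eball vzero r))%E.
  apply: le_measure cube_sub; rewrite inE.
  - exact: measurable_box.
  - exact: measurable_eball.
rewrite lebesgue_eball /box mu_lebesgue => [|i]; last first.
  by rewrite !tnth_mktuple lerNl (le_trans _ (ltW c_gt0)) // oppr_le0 ltW.
rewrite lee_fin; apply: lt_le_trans.
by apply: prodr_gt0 => i _; rewrite !tnth_mktuple opprK addr_gt0.
Qed.

Lemma Rintegral_eball_vadd x r (f : V -> R) :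
  measurable_fun setT f -> (forall y, 0 <= f y) ->
  \int[mu]_(z in eball vzero r) f (vadd x z) = \int[mu]_(y in eball x r) f y.
Proof.
move=> mf f_ge0; have mx := measurable_vadd x; congr fine.
transitivity (\int[pushforward mu (vadd x)]_(y in eball x r) (f y)%:E)%E.
  rewrite [RHS]ge0_integral_pushforward ?preimage_vadd_eball //.
  - exact: measurable_eball.
  - by apply/measurable_realfun.measurable_EFinP; apply: measurable_funS mf.
  - by move=> y _; rewrite lee_fin.
apply: eq_measure_integral => A mA _.
exact: lebesgue_preimage_vadd.
Qed.

End lebesgue_measure.

Lemma integrable_cst_lty (dT : measure_display) (T : measurableType dT)
    (R : realType) (mu : {measure set T -> \bar R}) (A : set T) (c : R) :
  measurable A -> (mu A < +oo)%E -> mu.-integrable A (EFin \o cst c).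
Proof.
move=> mA muA; apply: measurable_bounded_integrable => //.
exact: bounded_cst.
Qed.

Section densities.
Context {R : realType} {d : nat}.
Local Notation V := (d.-tuple R).
Variables (mu : {measure set V -> \bar R}) (p : V -> R).
Hypothesis p_density : is_density mu p.

Lemma density_integrable A : measurable A -> mu.-integrable A (EFin \o p).
Proof.
case: p_density => mp p_ge0 p1 mA.
apply/integrableP; split.
  by apply/measurable_realfun.measurable_EFinP; exact: measurable_funS mp.
under eq_integral do rewrite gee0_abs ?lee_fin //.
rewrite (le_lt_trans _ (ltry 1)) // -p1.
apply: ge0_subset_integral => //; first exact/measurable_realfun.measurable_EFinP.
by move=> y _; rewrite lee_fin.
Qed.

Lemma distr_ofE A : measurable A -> distr_of mu p A = (\int[mu]_(y in A) p y)%:E.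
Proof.
by move=> mA; rewrite fineK // integrable_fin_num // density_integrable.
Qed.

End densities.

Section coupling.
Context {R : realType} {d : nat}.
Local Notation V := (d.-tuple R).
Variable mu : {measure set V -> \bar R}.

Lemma W2_lt_coupling (p q : V -> R) (c : R) : 0 <= c -> (W2 mu p q < c%:E)%E ->
  exists2 pi, couplings mu p q pi &
    (\int[pi]_z (enorm (vsub z.1 z.2) ^+ 2)%:E < (c ^+ 2)%:E)%E.
Proof.
rewrite /W2; set S := [set _ | _ in _] => c_ge0 W2c.
suff /ereal_inf_lt[_ [pi pi_coupl <-]] : (ereal_inf S < (c ^+ 2)%:E)%E.
  by exists pi.
rewrite ltNge; apply/negP => c2_le.
have S_ge0 : (0 <= ereal_inf S)%E.
  apply/ereal_infP => _ [pi _ <-].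
  by apply: integral_ge0 => z _; rewrite lee_fin sqr_ge0.
have := @gt0_ler_poweR R 2^-1 ltac:(by []) _ _ _ _ c2_le.
rewrite poweR_EFin powR12_sqrt ?sqr_ge0 // sqrtr_sqr ger0_norm //.
rewrite !in_itv /= !leey lee_fin sqr_ge0 S_ge0 => /(_ isT isT).
by move/(lt_le_trans W2c); rewrite ltxx.
Qed.

Lemma probability_enorm_vsub_ge_le (pi : probability (V * V)%type R) (eps : R) :
  0 < eps -> (\int[pi]_z (enorm (vsub z.1 z.2) ^+ 2)%:E < (eps ^+ 4)%:E)%E ->
  (pi [set z | (eps <= enorm (vsub z.1 z.2))%R] <= eps%:E)%E.
Proof.
move=> eps_gt0 cost_lt; set far := [set z | _].
have mcost := (measurable_realfun.measurable_EFinP _ _).2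
  (@measurable_sqr_enorm_vsub R d).
(* Markov's inequality for the squared distance at level [eps ^+ 2] *)
have := le_integral_abse pi measurableT mcost (exprn_gt0 2 eps_gt0).
have -> :
    setT `&` [set z | ((eps ^+ 2)%:E <= `|(enorm (vsub z.1 z.2) ^+ 2)%:E|)%E] = far.
  apply/seteqP; split => z /=; rewrite ger0_norm ?sqr_ge0 // lee_fin;
  by rewrite ler_sqr ?nnegrE ?enorm_ge0 ?(ltW eps_gt0) //; case.
under eq_integral do rewrite gee0_abs ?lee_fin ?sqr_ge0 //.
move=> /le_lt_trans/(_ cost_lt).
have far_le1 : (pi far <= 1)%E.
  by apply: probability_le1; exact: measurable_enorm_vsub_ge.
move=> markov; set t := fine (pi far).
have piE : pi far = t%:E.
  by rewrite fineK // ge0_fin_numE ?measure_ge0 // (le_lt_trans far_le1) ?ltry.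
have t_lt : eps ^+ 2 * t < eps ^+ 2 * eps ^+ 2.
  by rewrite -lte_fin EFinM -piE -exprD; exact: markov.
have t_le1 : t <= 1 by rewrite -lee_fin -piE.
rewrite ltr_pM2l ?exprn_gt0 // in t_lt.
rewrite piE lee_fin; have [|eps_lt1] := leP 1 eps; first exact: le_trans.
by rewrite (le_trans (ltW t_lt)) // expr2 ger_pMr // ltW.
Qed.

Lemma coupling_eball_le {p q : V -> R} (pi : probability (V * V)%type R) x r eps :
  couplings mu p q pi ->
  (distr_of mu p (eball x r) <= distr_of mu q (eball x (r + eps))
     + pi [set z | (eps <= enorm (vsub z.1 z.2))%R])%E.
Proof.
move=> pi_coupl.
have [<- _] := pi_coupl _ (measurable_eball x r).
have [_ <-] := pi_coupl _ (measurable_eball x (r + eps)).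
have mB : measurable ([set: V] `*` eball x (r + eps)).
  exact: measurableX measurableT (measurable_eball _ _).
apply: le_trans (measureU2 pi mB (measurable_enorm_vsub_ge eps)).
apply: le_measure; rewrite ?inE.
- exact: measurableX (measurable_eball _ _) measurableT.
- exact: measurableU mB (measurable_enorm_vsub_ge _).
move=> [u v] /= [ur _]; have [|vu] := leP eps (enorm (vsub u v)); [by right|left].
split => //; rewrite /eball /= (le_lt_trans (enorm_vsub_le v u x)) //.
by rewrite enorm_vsubC addrC ltrD.
Qed.

Lemma distr_of_eball_le_W2 {p q : V -> R} x r eps :
  0 < eps -> (W2 mu p q < (eps ^+ 2)%:E)%E ->
  (distr_of mu p (eball x r) <= distr_of mu q (eball x (r + eps)) + eps%:E)%E.
Proof.
move=> eps_gt0 /W2_lt_coupling[|pi pi_coupl cost_lt]; first exact: sqr_ge0.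
apply: le_trans (coupling_eball_le pi x r eps pi_coupl) _.
rewrite leeD2l //; apply: probability_enorm_vsub_ge_le => //.
by rewrite -[4%N]/(2 * 2)%N exprM.
Qed.

End coupling.

Lemma lipschitz_ge0 {R : realType} {d : nat} {L : R} {p : d.-tuple R -> R}
    {x y : d.-tuple R} :
  lipschitz_with L p -> 0 < enorm (vsub x y) -> 0 <= L.
Proof. by move=> pL xy; rewrite -(pmulr_lge0 _ xy) (le_trans _ (pL x y)). Qed.

Section lipschitz_density.
Context {R : realType} {d : nat}.
Local Notation V := (d.-tuple R).
Variables (mu : {measure set V -> \bar R}) (p : V -> R) (L : R) (x : V) (r s : R).
Hypotheses (mu_lebesgue : is_lebesgue mu) (p_density : is_density mu p)
  (p_lipschitz : lipschitz_with L p) (r_gt0 : 0 < r) (r_le_s : r <= s).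

Lemma lipschitz_le_eball_mean z : r <= enorm (vsub z x) < s ->
  p z <= (\int[mu]_(y in eball x r) p y) / vol mu r + 2 * s * L.
Proof.
case/andP => rz zs.
have L_ge0 : 0 <= L := lipschitz_ge0 p_lipschitz (lt_le_trans r_gt0 rz).
have vol_r_gt0 : 0 < vol mu r by exact: vol_gt0.
have mB := measurable_eball x r.
rewrite -lerBlDr -(ler_pM2r vol_r_gt0) divfK ?gt_eqF //.
have <- : \int[mu]_(_ in eball x r) (p z - 2 * s * L) =
    (p z - 2 * s * L) * vol mu r.
  by rewrite Rintegral_cst // lebesgue_eball.
apply: le_Rintegral => //; last move=> w /= wr.
- by apply: integrable_cst_lty => //; exact: lebesgue_eball_lty.
- exact: density_integrable.
have zw : enorm (vsub z w) <= 2 * s.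
  rewrite (le_trans (enorm_vsub_le z x w)) // (enorm_vsubC x) mulr2n mulrDl mul1r.
  by rewrite lerD ?ltW // (lt_le_trans wr).
have := p_lipschitz z w; rewrite ler_norml => /andP[_].
by have := ler_wpM2l L_ge0 zw; lra.
Qed.

Lemma Rintegral_eball_lipschitz_le :
  \int[mu]_(y in eball x s) p y <=
    vol mu s / vol mu r * \int[mu]_(y in eball x r) p y
    + (vol mu s - vol mu r) * (2 * s * L).
Proof.
set I := \int[mu]_(y in eball x r) p y; set Ann := eball x s `\` eball x r.
have mB := measurable_eball x r.
have mAnn : measurable Ann by exact: measurableD (measurable_eball x s) mB.
have Ann_le :
    \int[mu]_(y in Ann) p y <= \int[mu]_(_ in Ann) (I / vol mu r + 2 * s * L).
  apply: le_Rintegral => //.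
  - exact: density_integrable.
  - by apply: integrable_cst_lty => //; rewrite lebesgue_annulus // ltry.
  move=> y [ys /negP]; rewrite /eball /= -leNgt => ry.
  by apply: lipschitz_le_eball_mean; rewrite ry.
rewrite Rintegral_cst // lebesgue_annulus // in Ann_le.
have -> : eball x s = eball x r `|` Ann by rewrite setDUK // => y /lt_le_trans; apply.
rewrite Rintegral_setU //; first last.
- by rewrite /disj_set /Ann setDIK.
- by apply: density_integrable => //; exact: measurableU.
have vol_r_gt0 : 0 < vol mu r by exact: vol_gt0.
have -> : vol mu s / vol mu r * I + (vol mu s - vol mu r) * (2 * s * L) =
    I + (I / vol mu r + 2 * s * L) * (vol mu s - vol mu r).
  by field; rewrite gt_eqF.
by rewrite lerD2l.
Qed.

Lemma vol_annulus_lipschitz_ge0 : 0 <= (vol mu s - vol mu r) * L.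
Proof.
have [->|vol_neq] := eqVneq (vol mu s) (vol mu r); first by rewrite subrr mul0r.
have [[z [zs /negP]]|Ann0] := pselect (exists z, (eball x s `\` eball x r) z).
  rewrite /eball /= -leNgt => rz.
  rewrite mulr_ge0 ?subr_ge0 ?vol_le //.
  exact: lipschitz_ge0 p_lipschitz (lt_le_trans r_gt0 rz).
have : mu (eball x s `\` eball x r) = 0.
  rewrite (_ : _ `\` _ = set0) ?measure0 //.
  by apply/seteqP; split => // z Annz; apply: Ann0; exists z.
by rewrite lebesgue_annulus // => -[/eqP]; rewrite subr_eq0 (negbTE vol_neq).
Qed.

End lipschitz_density.

Lemma ler_ratio_bound {R : realFieldType} (a b u v w e K : R) :
  0 < a -> a <= b -> 0 <= (b - a) * K ->
  u <= b / a * v + (b - a) * K -> v <= w + e ->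
  b^-1 * u <= b / a * (b^-1 * w) + (b / a - 1) * K + e / a.
Proof.
move=> a_gt0 ab K_ge0 uv vw; have b_gt0 := lt_le_trans a_gt0 ab.
have -> : b / a * (b^-1 * w) + (b / a - 1) * K + e / a =
    b^-1 * (b / a * (w + e) + b / a * ((b - a) * K)).
  by field; rewrite !gt_eqF.
rewrite ler_pM2l ?invr_gt0 // (le_trans uv) // lerD //.
- by rewrite ler_wpM2l // divr_ge0 // ltW.
- by rewrite ler_peMl // ler_pdivlMr // mul1r.
Qed.

Theorem theorem2 (R : realType) (d : nat)
  (mu : {measure set (d.-tuple R) -> \bar R}) (Hmu : is_lebesgue mu)
  (p q : d.-tuple R -> R) (L eps lam : R)
  (Hp : is_density mu p) (Hq : is_density mu q)
  (Hp2 : finite_second_moment mu p) (Hq2 : finite_second_moment mu q)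
  (HLp : lipschitz_with L p) (HLq : lipschitz_with L q)
  (Heps : 0 < eps) (Hlam : eps < lam)
  (HW : (W2 mu p q < (eps ^+ 2)%:E)%E) :
  forall x : d.-tuple R,
    smooth mu lam p x <=
      vol mu lam / vol mu (lam - eps) * smooth mu lam q x
      + (vol mu lam / vol mu (lam - eps) - 1) * (2 * lam * L)
      + eps / vol mu (lam - eps).
Proof.
move=> x; have [[mp p_ge0 _] [mq q_ge0 _]] := (Hp, Hq).
have r_gt0 : 0 < lam - eps by rewrite subr_gt0.
have r_le_lam : lam - eps <= lam by rewrite gerBl ltW.
rewrite /smooth !Rintegral_eball_vadd //.
apply: (ler_ratio_bound _ _ _ (\int[mu]_(y in eball x (lam - eps)) p y)).
- exact: vol_gt0.
- exact: vol_le.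
- rewrite mulrCA mulr_ge0 //.
    by rewrite mulr_ge0 // ltW // (lt_trans Heps Hlam).
  exact: vol_annulus_lipschitz_ge0 HLp r_gt0 r_le_lam.
- exact: Rintegral_eball_lipschitz_le.
- have := distr_of_eball_le_W2 mu x (lam - eps) eps Heps HW.
  rewrite subrK !distr_ofE -?EFinD ?lee_fin //; exact: measurable_eball.
Qed.
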